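(* Let $q$ be odd, $\alpha,\beta\in\mathbb{F}_{q^2}$ with $\alpha\ne0$ and $(\beta^q-\beta)^2+4\alpha^{q+1}$ a nonsquare in $\mathbb{F}_q$, and let $R_1=(0,\epsilon,1)$. Then (1) $\mathrm{pedal}(R_1)$ consists exactly of the points $Q_x=(x,\,2\alpha x^2+(\beta-\beta^q)x^{q+1}+\epsilon,\,1)$ with $x\in\mathbb{F}_{q^2}$ satisfying $\alpha x^2-\alpha^q x^{2q}+(\beta-\beta^q)x^{q+1}+2\epsilon=0$; (2) the points of $\mathrm{pedal}(R_1)$ lie on the lines of the Baer pencil joining the vertex $U_\infty=(1,0,0)$ to the Baer subline $\{E_{s-\epsilon}=(0,s-\epsilon,1): s\in\mathbb{F}_q\}\cup\{(0,1,0)\}$.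
   Context: Points of $\mathrm{PG}(2,q^2)$ have homogeneous coordinates $(x,y,z)$. $\zeta$ is a primitive element of $\mathbb{F}_{q^2}$ and $\epsilon=\zeta^{(q+1)/2}$ (so $\epsilon^q=-\epsilon$ and $\epsilon^2$ is a primitive element of $\mathbb{F}_q$). $\mathcal U_{\alpha\beta}=\{(x,\alpha x^2+\beta x^{q+1}+r,1): x\in\mathbb{F}_{q^2}, r\in\mathbb{F}_q\}\cup\{(0,1,0)\}$, which under the hypotheses is a unital (a set of $q^3+1$ points meeting every line in $1$ or $q+1$ points). For a point $P$ not on the unital, $\mathrm{pedal}(P)$ is the set of points of contact of the $q+1$ tangent lines (lines meeting the unital in exactly one point) through $P$. A Baer pencil is the set of $q+1$ lines joining a vertex point to the $q+1$ points of a Baer subline (a set of points of a line projectively equivalent to $\mathrm{PG}(1,q)$). *)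

From HB Require Import structures.
From mathcomp Require Import all_boot all_order all_algebra all_field.
Set Implicit Arguments. Unset Strict Implicit. Unset Printing Implicit Defensive.
Import GRing.Theory.
Local Open Scope ring_scope.

Section PG2.
Variable F : fieldType.

Definition pt := (F * F * F)%type.
Definition mkpt (x y z : F) : pt := (x, y, z).
Definition px (P : pt) : F := P.1.1.
Definition py (P : pt) : F := P.1.2.
Definition pz (P : pt) : F := P.2.

Definition proj_eq (P Q : pt) : Prop :=
  exists2 k : F, k != 0 & P = mkpt (k * px Q) (k * py Q) (k * pz Q).

Definition incident (l P : pt) : Prop :=
  px l * px P + py l * py P + pz l * pz P = 0.

Definition is_line (l : pt) : Prop := l != (0, 0, 0).

Variables (q : nat) (alpha beta : F).

Definition in_Fq (r : F) : Prop := r ^+ q = r.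

Definition on_unital (P : pt) : Prop :=
  (exists x r, in_Fq r /\
      proj_eq P (mkpt x (alpha * x ^+ 2 + beta * x ^+ q.+1 + r) 1))
  \/ proj_eq P (mkpt 0 1 0).

Definition tangent_line (l : pt) : Prop :=
  is_line l /\
  exists P, [/\ on_unital P, incident l P &
                forall Q, on_unital Q -> incident l Q -> proj_eq Q P].

Definition in_pedal (R P : pt) : Prop :=
  exists l, [/\ tangent_line l, incident l R, on_unital P & incident l P].

Definition collinear (P A B : pt) : Prop :=
  exists l, [/\ is_line l, incident l P, incident l A & incident l B].

End PG2.

(* Write g x = alpha x^2 + beta x^(q+1) and skew w = w - w^q, whose kernel is F_q;
   the affine points of the unital are the (x, y) with skew (y - g x) = 0. On the
   line of slope m through a unital point (x0, y0), the point (x0 + t, y0 + m t)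
   is on the unital iff skew (d t) = skew (g t), where
   d = m - (2 alpha x0 + (beta - beta^q) x0^q). The nonsquare hypothesis says
   exactly that skew (g t) vanishes only at t = 0, so the line is tangent iff
   d = 0 (if d <> 0, some t = s eps / d with s in F_q is a second point). Thus a
   tangent through R1 = (0, eps) touches at a point with y0 = m x0 + eps, m the
   tangent slope: this is Q_x0, and the unital condition there is the stated
   equation. It also makes y0 + eps lie in F_q, so Q_x0 is on the line Y = y0 Z
   through U_oo and (0, y0, 1). That eps^q = -eps comes from
   zeta^((q^2 - 1)/2) = -1 for a primitive element zeta. *)

From HB Require Import structures.
From mathcomp Require Import all_boot all_order all_algebra all_field all_fingroup all_solvable.
From mathcomp Require Import ring zify.
Set Implicit Arguments.
Unset Strict Implicit.
Unset Printing Implicit Defensive.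
Import GRing.Theory.
Local Open Scope ring_scope.

Section Generator.
Variables (F : finFieldType) (zeta : F).
Hypothesis zeta_gen : forall y : F, y != 0 -> exists k : nat, zeta ^+ k = y.

Lemma generator_neq0 : 2%:R != 0 :> F -> zeta != 0.
Proof.
move=> two_neq0; apply/eqP => zeta0; move: two_neq0.
have [[|k]] : exists k : nat, zeta ^+ k = -1 by apply: zeta_gen; rewrite oppr_eq0 oner_eq0.
  by rewrite expr0 -addn1 natrD => e; rewrite {1}e addNr eqxx.
by rewrite zeta0 expr0n => /esym/eqP; rewrite oppr_eq0 oner_eq0.
Qed.

Lemma card_nonzero_le_period n : (0 < n)%N -> zeta ^+ n = 1 -> (#|F|.-1 <= n)%N.
Proof.
move=> n_gt0 zn; rewrite -(cardC1 0).
have sub : predC1 (0 : F) \subset [set zeta ^+ (val i) | i : 'I_n].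
  apply/subsetP => y /zeta_gen[k <-]; apply/imsetP.
  exists (Ordinal (ltn_pmod k n_gt0)) => //=.
  by rewrite {1}(divn_eq k n) exprD mulnC exprM zn expr1n mul1r.
by rewrite -[n]card_ord; exact: leq_trans (subset_leq_card sub) (leq_imset_card _ _).
Qed.

Lemma generator_half_card : odd #|F| -> 2%:R != 0 :> F -> zeta ^+ #|F|./2 = -1.
Proof.
move=> odd_card two_neq0.
have zeta_neq0 := generator_neq0 two_neq0.
have card_gt1 := finNzRing_gt1 F.
have sq1 : (zeta ^+ #|F|./2) ^+ 2 = 1.
  apply: (mulfI zeta_neq0); rewrite mulr1 -exprM -exprS muln2 -[RHS]expf_card.
  by rewrite -{2}(odd_double_half #|F|) odd_card.
have : (zeta ^+ #|F|./2 - 1) * (zeta ^+ #|F|./2 + 1) = 0.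
  by rewrite -subr_sqr sq1 expr1n subrr.
move/eqP; rewrite mulf_eq0 subr_eq0 addr_eq0 => /orP[/eqP half1|/eqP //].
have cardE : #|F| = (#|F|./2).*2.+1 by rewrite -{1}(odd_double_half #|F|) odd_card.
have half_gt0 : (0 < #|F|./2)%N by move: card_gt1; rewrite cardE; lia.
by have := card_nonzero_le_period half_gt0 half1; rewrite {1}cardE; lia.
Qed.

End Generator.

Section SquareOrderField.
Variables (F : finFieldType) (q : nat).
Hypothesis cardF : #|F| = (q ^ 2)%N.

Lemma pchar_pnat_sqrt_card p : p \in [pchar F] -> p.-nat q.
Proof.
move=> chFp; have pF : p.-nat #|F|.
  by have := abelem_pgroup (fin_ring_pchar_abelem chFp); rewrite /pgroup cardsT.
by apply: pnat_dvd pF; rewrite cardF dvdn_mull.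
Qed.

Lemma expq_add (x y : F) : (x + y) ^+ q = x ^+ q + y ^+ q.
Proof.
have [p _ chFp] := finPcharP F.
by apply: exprDn_pchar; rewrite (eq_pnat _ (pcharf_eq chFp)) pchar_pnat_sqrt_card.
Qed.

Lemma expqK (x : F) : (x ^+ q) ^+ q = x.
Proof. by rewrite -exprM mulnn -cardF expf_card. Qed.

Lemma two_neq0_odd : odd q -> 2%:R != 0 :> F.
Proof.
move=> odd_q; apply/negP => two0.
have /p_natP[k def_q] : (2 : nat).-nat q by apply: pchar_pnat_sqrt_card; rewrite inE two0.
have q1 : q = 1%N by move: odd_q; rewrite def_q oddX orbF; case: k {def_q}.
by have := finNzRing_gt1 F; rewrite cardF q1.
Qed.

Lemma expq_half_generator (zeta : F) : odd q ->
  (forall y : F, y != 0 -> exists k : nat, zeta ^+ k = y) ->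
  (zeta ^+ (q.+1 %/ 2)) ^+ q = - zeta ^+ (q.+1 %/ 2).
Proof.
move=> odd_q zeta_gen.
have [j def_q] : exists j, q = j.*2.+1.
  by exists q./2; rewrite -{1}(odd_double_half q) odd_q.
have cardE : #|F| = (true + (j * j.+1).*2.*2)%N by rewrite cardF def_q -!muln2; lia.
have half_q : (q.+1 %/ 2 = j.+1)%N by rewrite def_q; lia.
have expE : (q.+1 %/ 2 * q = #|F|./2 + q.+1 %/ 2)%N.
  by rewrite half_q cardE half_bit_double def_q -!muln2; nia.
rewrite -exprM expE exprD generator_half_card ?mulN1r ?two_neq0_odd //.
by rewrite cardF oddX odd_q orbT.
Qed.

End SquareOrderField.

Section Projective.
Variable F : fieldType.
Implicit Types (P Q R l : pt F) (x y : F).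

Lemma proj_eq_refl P : proj_eq P P.
Proof. by exists 1; rewrite ?oner_eq0 //; case: P => [[x y] z]; rewrite /mkpt !mul1r. Qed.

Lemma proj_eq_sym P Q : proj_eq P Q -> proj_eq Q P.
Proof.
case: P Q => [[x1 y1] z1] [[x2 y2] z2] [k k_neq0 [-> -> ->]].
exists k^-1; first by rewrite invr_eq0.
by rewrite /mkpt /px /py /pz /= !mulrA !mulVf // !mul1r.
Qed.

Lemma proj_eq_trans P Q R : proj_eq P Q -> proj_eq Q R -> proj_eq P R.
Proof.
case: P Q R => [[x1 y1] z1] [[x2 y2] z2] [[x3 y3] z3].
move=> [k k_neq0 [-> -> ->]] [k' k'_neq0 [-> -> ->]].
by exists (k * k'); rewrite ?mulf_neq0 // /mkpt /px /py /pz /= !mulrA.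
Qed.

Lemma proj_eq_incident l P Q : proj_eq P Q -> incident l P -> incident l Q.
Proof.
case: P Q => [[x1 y1] z1] [[x2 y2] z2] [k k_neq0 [-> -> ->]].
rewrite /incident /px /py /pz /= => lP.
have /eqP : k * (l.1.1 * x2 + l.1.2 * y2 + l.2 * z2) = 0 by rewrite -lP; ring.
by rewrite mulf_eq0 (negbTE k_neq0) => /eqP.
Qed.

Lemma proj_eq_affine x y x' y' :
  proj_eq (mkpt x y 1) (mkpt x' y' 1) -> x = x' /\ y = y'.
Proof. by case=> k _ [-> -> k1]; rewrite /pz /= mulr1 in k1; rewrite /px /py /= -k1 !mul1r. Qed.

Lemma affine_neq_Yinf x y : ~ proj_eq (mkpt x y 1) (mkpt 0 1 0).
Proof. by case=> k _ [_ _ /eqP]; rewrite /pz /= mulr0 oner_eq0. Qed.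

Lemma nonvertical_incident la lb lc P : lb != 0 ->
  incident (mkpt la lb lc) P <-> incident (mkpt (- la / lb) (-1) (- lc / lb)) P.
Proof.
move=> lb_neq0; rewrite /incident /px /py /pz /=.
have -> : - la / lb * P.1.1 + -1 * P.1.2 + - lc / lb * P.2
          = - lb^-1 * (la * P.1.1 + lb * P.1.2 + lc * P.2) by field.
split=> [->|/eqP]; first by rewrite mulr0.
by rewrite mulf_eq0 oppr_eq0 invr_eq0 (negbTE lb_neq0) => /eqP.
Qed.

Lemma incident_affine m c x y : incident (mkpt m (-1) c) (mkpt x y 1) <-> y = m * x + c.
Proof.
rewrite /incident /px /py /pz /= mulr1 mulN1r.
split=> [/eqP|->]; last by ring.
by rewrite addrAC subr_eq0 => /eqP ->.
Qed.

Lemma Yinf_off_slope_line (m c : F) : ~ incident (mkpt m (-1) c) (mkpt 0 1 0).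
Proof.
rewrite /incident /px /py /pz /= mulr0 mulr1 mulr0 addr0 add0r => /eqP.
by rewrite oppr_eq0 oner_eq0.
Qed.

End Projective.

Section Unital.
Variables (F : fieldType) (q : nat).
Hypothesis expqD : forall x y : F, (x + y) ^+ q = x ^+ q + y ^+ q.
Hypothesis expqK : forall x : F, (x ^+ q) ^+ q = x.

Definition qconj (x : F) : F := x ^+ q.
Definition skew (w : F) : F := w - qconj w.

Lemma qconjD x y : qconj (x + y) = qconj x + qconj y. Proof. exact: expqD. Qed.
Lemma qconjK : involutive qconj. Proof. exact: expqK. Qed.
Lemma qconj0 : qconj 0 = 0.
Proof. by apply: (addrI (qconj 0)); rewrite -qconjD !addr0. Qed.
Lemma qconjN x : qconj (- x) = - qconj x.
Proof. by apply: (addrI (qconj x)); rewrite -qconjD !subrr qconj0. Qed.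
Lemma qconjB x y : qconj (x - y) = qconj x - qconj y.
Proof. by rewrite qconjD qconjN. Qed.
Lemma qconjM x y : qconj (x * y) = qconj x * qconj y. Proof. exact: exprMn. Qed.
Lemma qconjX x n : qconj (x ^+ n) = qconj x ^+ n. Proof. exact: exprAC. Qed.
Lemma qconjV x : qconj x^-1 = (qconj x)^-1. Proof. exact: exprVn. Qed.
Lemma qconj_nat n : qconj n%:R = n%:R.
Proof. by elim: n => [|n IHn]; rewrite ?qconj0 // -addn1 natrD qconjD IHn /qconj expr1n. Qed.
Lemma qconj_eq0 x : (qconj x == 0) = (x == 0).
Proof. by apply/eqP/eqP => [x0|->]; rewrite ?qconj0 // -[x]qconjK x0 qconj0. Qed.

Let qconjE := (qconjD, qconjB, qconjN, qconjM, qconjX, qconjV, qconj_nat, qconjK).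

Lemma skew_eq0 w : skew w = 0 <-> qconj w = w.
Proof. by rewrite /skew; split=> [/eqP|->]; rewrite ?subrr // subr_eq0 => /eqP. Qed.

Lemma qconj_skew w : qconj (skew w) = - skew w.
Proof. by rewrite /skew qconjB qconjK opprB. Qed.

Lemma skewZ s w : qconj s = s -> skew (s * w) = s * skew w.
Proof. by rewrite /skew qconjM => ->; rewrite mulrBr. Qed.

Variables (alpha beta eps : F).
Hypothesis eps_neq0 : eps != 0.
Hypothesis qconj_eps : qconj eps = - eps.
Hypothesis two_neq0 : 2%:R != 0 :> F.
Hypothesis disc_nonsquare : ~ (exists y : F, in_Fq q y /\
  y ^+ 2 = (beta ^+ q - beta) ^+ 2 + 4%:R * alpha ^+ q.+1).

Definition unital_poly x := alpha * x ^+ 2 + beta * (x * qconj x).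
Definition affine_unital x y : Prop := skew (y - unital_poly x) = 0.
Definition tangent_slope x := 2%:R * alpha * x + (beta - qconj beta) * qconj x.
Definition pedal_point x := mkpt x (tangent_slope x * x + eps) 1.

Lemma skew_unital_poly_eq0 t : skew (unital_poly t) = 0 -> t = 0.
Proof.
move=> Qt0; apply/eqP; apply: contraT => t_neq0.
(* Otherwise (alpha t^2 + alpha^q t^(2q)) / t^(q+1) is a square root in F_q of
   the discriminant. *)
have T_neq0 : qconj t != 0 by rewrite qconj_eq0.
have AE : qconj alpha
          = (alpha * t ^+ 2 + (beta - qconj beta) * (t * qconj t)) / qconj t ^+ 2.
  apply: (mulIf (expf_neq0 2 T_neq0)); rewrite divfK ?expf_neq0 //.
  apply/eqP; rewrite -subr_eq0 -oppr_eq0; apply/eqP.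
  by rewrite -Qt0 /skew /unital_poly !qconjE; ring.
case: disc_nonsquare.
exists ((alpha * t ^+ 2 + qconj alpha * qconj t ^+ 2) / (t * qconj t)); split.
  by rewrite /in_Fq -/(qconj _) !qconjE addrC [qconj t * t]mulrC.
rewrite [alpha ^+ q.+1]exprS -/(qconj beta) -/(qconj alpha) AE.
by field; rewrite T_neq0 t_neq0.
Qed.

Lemma skew_unital_polyZ s t : qconj s = s ->
  skew (unital_poly (s * t)) = s ^+ 2 * skew (unital_poly t).
Proof. by move=> qconj_s; rewrite /skew /unital_poly !qconjE qconj_s; ring. Qed.

Lemma affine_unital_shift x0 y0 m t : affine_unital x0 y0 ->
  affine_unital (x0 + t) (y0 + m * t) <->
  skew ((m - tangent_slope x0) * t) = skew (unital_poly t).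
Proof.
rewrite /affine_unital => U0.
have -> : skew (y0 + m * t - unital_poly (x0 + t)) = skew (y0 - unital_poly x0)
          + (skew ((m - tangent_slope x0) * t) - skew (unital_poly t)).
  by rewrite /skew /unital_poly /tangent_slope !qconjE; ring.
rewrite U0 add0r; split=> [/eqP|->]; last by rewrite subrr.
by rewrite subr_eq0 => /eqP.
Qed.

Lemma tangent_meets_once x0 y0 x1 : affine_unital x0 y0 ->
  affine_unital x1 (y0 + tangent_slope x0 * (x1 - x0)) -> x1 = x0.
Proof.
move=> U0; rewrite -{1}(subrK x0 x1) addrC => /(affine_unital_shift _ _ U0).
rewrite subrr mul0r /skew qconj0 subr0 => /esym/skew_unital_poly_eq0/eqP.
by rewrite subr_eq0 => /eqP.
Qed.

Lemma secant_meets_twice x0 y0 m : affine_unital x0 y0 -> m != tangent_slope x0 ->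
  exists2 t, t != 0 & affine_unital (x0 + t) (y0 + m * t).
Proof.
rewrite -subr_eq0 => U0 d_neq0.
(* For t = s u with s in F_q and d u = eps, the condition reads 2 s eps = s^2 skew (g u). *)
pose u := eps / (m - tangent_slope x0).
have u_neq0 : u != 0 by rewrite mulf_neq0 ?invr_eq0.
have du : (m - tangent_slope x0) * u = eps by rewrite mulrC divfK.
have N_neq0 : skew (unital_poly u) != 0.
  by apply: contra_neq u_neq0 => /skew_unital_poly_eq0.
pose s := 2%:R * eps / skew (unital_poly u).
have qconj_s : qconj s = s.
  by rewrite /s !qconjM qconjV qconj_skew qconj_nat qconj_eps invrN !mulrN mulNr opprK.
exists (s * u); first by rewrite mulf_neq0 // !mulf_neq0 ?invr_eq0.
apply/(affine_unital_shift _ _ U0).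
rewrite skew_unital_polyZ // mulrCA skewZ // du [skew eps]/skew qconj_eps opprK /s.
by field.
Qed.

Lemma on_unitalP P : on_unital q alpha beta P <->
  proj_eq P (mkpt 0 1 0) \/ exists x y, affine_unital x y /\ proj_eq P (mkpt x y 1).
Proof.
have yE x r : alpha * x ^+ 2 + beta * x ^+ q.+1 + r = r + unital_poly x.
  by rewrite [x ^+ q.+1]exprS /unital_poly -/(qconj x); ring.
split=> [[[x [r [r_Fq Px]]]|Pinf] | [Pinf|[x [y [Uxy Px]]]]]; [ | by left | by right | left].
  right; exists x, (r + unital_poly x); split; last by rewrite -yE.
  by rewrite /affine_unital addrK; apply/skew_eq0.
exists x, (y - unital_poly x); split; first exact/skew_eq0.
by rewrite yE subrK.
Qed.

Lemma tangent_line_contact l P Q : tangent_line q alpha beta l ->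
  on_unital q alpha beta P -> incident l P ->
  on_unital q alpha beta Q -> incident l Q -> proj_eq P Q.
Proof.
case=> _ [P0 [_ _ uniq_P0]] UP lP UQ lQ.
exact: proj_eq_trans (uniq_P0 _ UP lP) (proj_eq_sym (uniq_P0 _ UQ lQ)).
Qed.

Lemma affine_unital_origin : affine_unital 0 0.
Proof.
by rewrite /affine_unital /unital_poly /skew qconj0 expr0n /= !(mulr0, addr0, subr0, qconj0).
Qed.

Lemma affine_on_unital x y : affine_unital x y -> on_unital q alpha beta (mkpt x y 1).
Proof. by move=> Uxy; apply/on_unitalP; right; exists x, y; split; last exact: proj_eq_refl. Qed.

Lemma tangent_through_R1_nonvertical la lb lc :
  tangent_line q alpha beta (mkpt la lb lc) -> incident (mkpt la lb lc) (mkpt 0 eps 1) ->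
  lb != 0.
Proof.
move=> tan_l l_R1; apply/eqP => lb0.
have lc0 : lc = 0.
  by move: l_R1; rewrite /incident /px /py /pz /= lb0 mulr0 mul0r !add0r mulr1.
have l_inc (y z : F) : incident (mkpt la lb lc) (mkpt 0 y z).
  by rewrite /incident /px /py /pz /= lb0 lc0; ring.
have O_U : on_unital q alpha beta (mkpt 0 0 1).
  exact: affine_on_unital affine_unital_origin.
have Yinf_U : on_unital q alpha beta (mkpt 0 1 0) by right; exact: proj_eq_refl.
exact: affine_neq_Yinf (tangent_line_contact tan_l O_U (l_inc 0 1) Yinf_U (l_inc 1 0)).
Qed.

Lemma in_pedal_R1_pedal_point P : in_pedal q alpha beta (mkpt 0 eps 1) P ->
  exists x, affine_unital x (tangent_slope x * x + eps) /\ proj_eq P (pedal_point x).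
Proof.
case=> -[[la lb] lc] [tan_l l_R1 UP l_P].
have lb_neq0 := tangent_through_R1_nonvertical tan_l l_R1.
have c_eps : - lc / lb = eps.
  by move/(nonvertical_incident _ _ _ lb_neq0)/incident_affine: l_R1; rewrite mulr0 add0r.
set m := - la / lb.
have l_E Q : incident (mkpt la lb lc) Q <-> incident (mkpt m (-1) eps) Q.
  by rewrite -c_eps; exact: nonvertical_incident.
case/on_unitalP: UP => [P_inf | [x0 [y0 [U0 P_x0]]]].
  by move/l_E/(proj_eq_incident P_inf)/Yinf_off_slope_line: l_P.
have /incident_affine y0E : incident (mkpt m (-1) eps) (mkpt x0 y0 1).
  exact/(proj_eq_incident P_x0)/l_E.
have m_tan : m = tangent_slope x0.
  apply/eqP; apply: contraT => /(secant_meets_twice U0)[t t_neq0 Ut].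
  have l_t : incident (mkpt la lb lc) (mkpt (x0 + t) (y0 + m * t) 1).
    by apply/l_E/incident_affine; rewrite y0E; ring.
  have l_0 : incident (mkpt la lb lc) (mkpt x0 y0 1) by apply/l_E/incident_affine.
  have [] := proj_eq_affine (tangent_line_contact tan_l
    (affine_on_unital Ut) l_t (affine_on_unital U0) l_0).
  by rewrite -{2}[x0]addr0 => /addrI /eqP; rewrite (negbTE t_neq0).
by exists x0; rewrite /pedal_point -m_tan -y0E.
Qed.

Lemma pedal_point_in_pedal x P : affine_unital x (tangent_slope x * x + eps) ->
  proj_eq P (pedal_point x) -> in_pedal q alpha beta (mkpt 0 eps 1) P.
Proof.
move=> Ux P_x; set m := tangent_slope x.
have l_x : incident (mkpt m (-1) eps) (pedal_point x) by apply/incident_affine.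
have U_x : on_unital q alpha beta (pedal_point x) by exact: affine_on_unital.
exists (mkpt m (-1) eps); split.
- split; first by apply/eqP => -[_ /eqP]; rewrite oppr_eq0 oner_eq0.
  exists (pedal_point x); split=> // Q /on_unitalP[Q_inf | [x1 [y1 [U1 Q_x1]]]] l_Q.
    by case: (Yinf_off_slope_line (proj_eq_incident Q_inf l_Q)).
  have /incident_affine y1E := proj_eq_incident Q_x1 l_Q.
  have x1E : x1 = x.
    have y1E' : y1 = m * x + eps + m * (x1 - x) by rewrite y1E; ring.
    by apply: (tangent_meets_once Ux); rewrite -/m -y1E'.
  by rewrite /pedal_point -/m -x1E -y1E.
- by apply/incident_affine; rewrite mulr0 add0r.
- by apply/on_unitalP; right; exists x, (m * x + eps).
- exact: proj_eq_incident (proj_eq_sym P_x) l_x.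
Qed.

Lemma pedal_point_on_Baer_pencil x P : affine_unital x (tangent_slope x * x + eps) ->
  proj_eq P (pedal_point x) ->
  exists s, in_Fq q s /\ collinear P (mkpt 1 0 0) (mkpt 0 (s - eps) 1).
Proof.
move=> Ux P_x; exists (tangent_slope x * x + eps + eps); split.
  apply/skew_eq0; rewrite -[LHS]mul1r -(mulr0 2%:R) -Ux.
  by rewrite /skew /tangent_slope /unital_poly !qconjE qconj_eps; ring.
exists (mkpt 0 1 (- (tangent_slope x * x + eps))); rewrite addrK; split.
- by apply/eqP => -[/eqP]; rewrite oner_eq0.
- by apply: proj_eq_incident (proj_eq_sym P_x) _; rewrite /incident /px /py /pz /=; ring.
- by rewrite /incident /px /py /pz /=; ring.
- by rewrite /incident /px /py /pz /=; ring.
Qed.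

Lemma pedal_equationE x :
  skew (tangent_slope x * x + eps - unital_poly x) = alpha * x ^+ 2
    - alpha ^+ q * x ^+ (2 * q) + (beta - beta ^+ q) * x ^+ q.+1 + 2%:R * eps.
Proof.
rewrite mulnC exprM [x ^+ q.+1]exprS -/(qconj x) -/(qconj alpha) -/(qconj beta).
by rewrite /skew /tangent_slope /unital_poly !qconjE qconj_eps; ring.
Qed.

Lemma pedal_pointE x : pedal_point x =
  mkpt x (2%:R * alpha * x ^+ 2 + (beta - beta ^+ q) * x ^+ q.+1 + eps) 1.
Proof.
rewrite [x ^+ q.+1]exprS -/(qconj x) -/(qconj beta) /pedal_point /tangent_slope.
by congr mkpt; ring.
Qed.

Lemma in_pedal_R1P P : in_pedal q alpha beta (mkpt 0 eps 1) P <->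
  exists x, alpha * x ^+ 2 - alpha ^+ q * x ^+ (2 * q)
              + (beta - beta ^+ q) * x ^+ q.+1 + 2%:R * eps = 0 /\
            proj_eq P (mkpt x (2%:R * alpha * x ^+ 2 + (beta - beta ^+ q) * x ^+ q.+1 + eps) 1).
Proof.
split=> [/in_pedal_R1_pedal_point[x [Ux P_x]] | [x [Ex P_x]]].
  by exists x; rewrite -pedal_equationE -pedal_pointE.
apply: (pedal_point_in_pedal (x := x)).
  by rewrite /affine_unital pedal_equationE.
by rewrite pedal_pointE.
Qed.

Lemma in_pedal_R1_Baer_pencil P : in_pedal q alpha beta (mkpt 0 eps 1) P ->
  exists s, in_Fq q s /\ collinear P (mkpt 1 0 0) (mkpt 0 (s - eps) 1).
Proof.
by case/in_pedal_R1_pedal_point => x [Ux P_x]; exact: pedal_point_on_Baer_pencil Ux P_x.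
Qed.

End Unital.

Theorem lemma2p2 (F : finFieldType) (q : nat) (zeta alpha beta : F) :
  odd q ->
  #|F| = (q ^ 2)%N ->
  (* zeta is a primitive element of F_{q^2} *)
  (forall y : F, y != 0 -> exists k : nat, zeta ^+ k = y) ->
  alpha != 0 ->
  (* (beta^q - beta)^2 + 4 alpha^(q+1) is a nonsquare in F_q *)
  ~ (exists y : F, in_Fq q y /\
        y ^+ 2 = (beta ^+ q - beta) ^+ 2 + 4%:R * alpha ^+ q.+1) ->
  let eps := zeta ^+ (q.+1 %/ 2) in
  let R1 := mkpt 0 eps 1 in
  (* (1) description of pedal(R1) *)
  (forall P : pt F,
     in_pedal q alpha beta R1 P <->
     exists x : F,
       alpha * x ^+ 2 - alpha ^+ q * x ^+ (2 * q) + (beta - beta ^+ q) * x ^+ q.+1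
         + 2%:R * eps = 0 /\
       proj_eq P (mkpt x (2%:R * alpha * x ^+ 2 + (beta - beta ^+ q) * x ^+ q.+1 + eps) 1))
  /\
  (* (2) pedal(R1) lies on the Baer pencil with vertex U_oo = (1,0,0) and base
     the Baer subline {(0, s - eps, 1) : s in F_q} u {(0,1,0)} *)
  (forall P : pt F,
     in_pedal q alpha beta R1 P ->
     (exists s : F, in_Fq q s /\ collinear P (mkpt 1 0 0) (mkpt 0 (s - eps) 1))
     \/ collinear P (mkpt 1 0 0) (mkpt 0 1 0)).
Proof.
move=> odd_q cardF zeta_gen _ disc_nonsquare eps R1.
have two_neq0 := two_neq0_odd cardF odd_q.
have eps_neq0 : eps != 0 by rewrite expf_neq0 // generator_neq0.
have qconj_eps : eps ^+ q = - eps := expq_half_generator cardF odd_q zeta_gen.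
have [expqD expqK] := (expq_add cardF, expqK cardF).
split=> P.
  exact: (in_pedal_R1P expqD expqK eps_neq0 qconj_eps two_neq0 disc_nonsquare P).
move/(in_pedal_R1_Baer_pencil expqD expqK eps_neq0 qconj_eps two_neq0 disc_nonsquare).
by left.
Qed.
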